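(* Let $G$ be a finite simple graph with $G\in\mathcal{F}_3$. Then $crx_3(G)=3$ if and only if $G$ is isomorphic to $K_3$ or $K_4$.
   Context: An edge-coloured cycle is rainbow if all its edges have distinct colours. For $k\ge 1$, $\mathcal{F}_k$ is the family of graphs in which any $k$ vertices lie on a common cycle. For $G\in\mathcal{F}_k$, a $k$-rainbow cycle colouring of $G$ is an edge-colouring such that any $k$ vertices of $G$ lie on a common rainbow cycle; $crx_k(G)$ is the minimum number of colours in a $k$-rainbow cycle colouring of $G$. *)

From mathcomp Require Import all_boot.
Set Implicit Arguments. Unset Strict Implicit. Unset Printing Implicit Defensive.

Definition simple_graph (T : finType) (e : rel T) : Prop :=
  symmetric e /\ irreflexive e.

Definition is_graph_cycle (T : finType) (e : rel T) (s : seq T) : Prop :=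
  [/\ uniq s, 3 <= size s & cycle e s].

Definition in_F (k : nat) (T : finType) (e : rel T) : Prop :=
  forall S : {set T}, #|S| = k ->
    exists s : seq T, is_graph_cycle e s /\ {subset S <= s}.

Definition edge_colouring (T : finType) (e : rel T) (n : nat)
  (c : T -> T -> nat) : Prop :=
  forall x y, e x y -> c x y = c y x /\ c x y < n.

Definition rainbow (T : finType) (c : T -> T -> nat) (s : seq T) : bool :=
  uniq [seq c x (next s x) | x <- s].

Definition k_rainbow_cycle_colouring (k : nat) (T : finType) (e : rel T)
  (n : nat) (c : T -> T -> nat) : Prop :=
  edge_colouring e n c /\
  forall S : {set T}, #|S| = k ->
    exists s : seq T, [/\ is_graph_cycle e s, {subset S <= s} & rainbow c s].

Definition crx_eq (k : nat) (T : finType) (e : rel T) (n : nat) : Prop :=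
  (exists c, k_rainbow_cycle_colouring k e n c) /\
  forall m, m < n -> ~ exists c, k_rainbow_cycle_colouring k e m c.

Definition K_graph (n : nat) : rel 'I_n := fun i j => i != j.

Definition isomorphic (T U : finType) (e : rel T) (f : rel U) : Prop :=
  exists g : T -> U, bijective g /\ forall x y, e x y = f (g x) (g y).

From mathcomp Require Import all_boot.
Set Implicit Arguments. Unset Strict Implicit. Unset Printing Implicit Defensive.

(* A rainbow cycle under an n-colouring has at most n edges, so with 3
   colours every 3 vertices span a rainbow triangle.  Hence the graph is
   complete and the 3 edges seen from any vertex v to the others all have
   distinct colours, so v has at most 3 neighbours and |G| <= 4.  Conversely
   K_3 and K_4 carry a proper 3-edge-colouring (one colour per perfect
   matching of K_4), in which every triangle is rainbow, while fewer than 3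
   colours cannot make any cycle rainbow. *)

Lemma cards3 (T : finType) (x y z : T) :
  x != y -> x != z -> y != z -> #|[set x; y; z]| = 3.
Proof.
move=> xy xz yz; rewrite (@eq_card _ _ (mem [:: x; y; z])); last first.
  by move=> w; rewrite !inE orbA.
by apply: card_uniqP; rewrite /= !inE negb_or xy xz yz.
Qed.

Lemma exists_cards (T : finType) (k : nat) :
  k <= #|T| -> exists S : {set T}, #|S| = k.
Proof.
case/card_geqP=> s [s_uniq <- _]; exists [set x in s].
by rewrite cardsE; apply: card_uniqP.
Qed.

Lemma size_rainbow_cycle (T : finType) (e : rel T) (n : nat)
    (c : T -> T -> nat) (s : seq T) :
  edge_colouring e n c -> is_graph_cycle e s -> rainbow c s -> size s <= n.
Proof.
move=> c_col [_ _ s_cycle] s_rainbow.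
rewrite -(size_map (fun x => c x (next s x))) -(size_iota 0 n).
apply: uniq_leq_size => // _ /mapP [x xs ->].
by rewrite mem_iota add0n; case: (c_col _ _ (next_cycle s_cycle xs)).
Qed.

Lemma rainbow_colouring_ge3 (k : nat) (T : finType) (e : rel T) (n : nat)
    (c : T -> T -> nat) :
  k <= #|T| -> k_rainbow_cycle_colouring k e n c -> 3 <= n.
Proof.
move=> kT [c_col c_rainbow]; have [S cardS] := exists_cards kT.
have [s [s_cycle _ s_rainbow]] := c_rainbow S cardS.
apply: leq_trans (size_rainbow_cycle c_col s_cycle s_rainbow).
by case: s_cycle.
Qed.

Lemma small_rainbow_colouring (k : nat) (T : finType) (e : rel T) :
  #|T| < k -> k_rainbow_cycle_colouring k e 1 (fun _ _ => 0).
Proof.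
move=> Tk; split=> [//|S cardS].
by have := max_card (mem S); rewrite cardS leqNgt Tk.
Qed.

Lemma rainbow_triangleE (T : finType) (c : T -> T -> nat) (a b d : T) :
  uniq [:: a; b; d] ->
  rainbow c [:: a; b; d] = uniq [:: c a b; c b d; c d a].
Proof.
move=> /and3P []; rewrite !inE !negb_or => /andP [ab ad] bd _.
rewrite /rainbow /next /= !eqxx /=.
by rewrite eq_sym (negbTE ab) eq_sym (negbTE ad) eq_sym (negbTE bd).
Qed.

Lemma rainbow_triangle_edges (T : finType) (e : rel T) (c : T -> T -> nat)
    (a b d : T) :
  symmetric e -> (forall x y, e x y -> c x y = c y x) ->
  uniq [:: a; b; d] -> cycle e [:: a; b; d] -> rainbow c [:: a; b; d] ->
  {in [:: a; b; d] &, forall u w, {in [:: a; b; d], forall z,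
    u != w -> u != z -> w != z -> e u w /\ c u w != c u z}}.
Proof.
move=> e_sym c_sym abd_uniq abd_cycle.
rewrite rainbow_triangleE //.
move: abd_uniq abd_cycle; rewrite /= !inE !negb_or !andbT.
move=> /andP [/andP [ab ad] bd] /and3P [eab ebd eda].
have [eba edb ead] : [/\ e b a, e d b & e a d] by split; rewrite e_sym.
rewrite (c_sym _ _ eda) => /andP [/andP [cab_cbd cab_cad] cbd_cad].
move=> u w; rewrite !inE.
case/or3P=> /eqP-> ; case/or3P=> /eqP-> ; rewrite ?eqxx //= => z;
  rewrite !inE => /or3P [] /eqP-> ; rewrite ?eqxx //= => *;
  rewrite ?(c_sym _ _ eba) ?(c_sym _ _ edb) ?(c_sym _ _ eda);
  by split=> //; rewrite eq_sym.
Qed.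

Section ThreeRainbowColouring.

Variables (T : finType) (e : rel T) (c : T -> T -> nat).
Hypothesis e_sym : symmetric e.
Hypothesis c_col : k_rainbow_cycle_colouring 3 e 3 c.

Lemma rainbow_triangle_through x y z :
  x != y -> x != z -> y != z -> e x y /\ c x y != c x z.
Proof.
move=> xy xz yz; have [c_edge c_rainbow] := c_col.
have [s [s_cycle s_cover s_rainbow]] := c_rainbow _ (cards3 xy xz yz).
have := size_rainbow_cycle c_edge s_cycle s_rainbow.
case: s_cycle s_cover s_rainbow => + + +.
case: s => [|a [|b [|d [|? ?]]]] //= abd_uniq _ abd_cycle cover rainb _.
have c_sym x' y' : e x' y' -> c x' y' = c y' x' by case/c_edge.
by apply: (@rainbow_triangle_edges _ _ _ a b d) => //; apply: cover;
  rewrite !inE eqxx ?orbT.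
Qed.

Hypothesis T_ge3 : 2 < #|T|.

Lemma rainbow_colouring_complete x y : x != y -> e x y.
Proof.
move=> xy; have : 0 < #|~: [set x; y]|.
  have := cardsC [set x; y]; rewrite cards2 xy => card_split.
  by move: T_ge3; rewrite -card_split; case: #|~: _|.
case/card_gt0P=> z; rewrite !inE negb_or => /andP [zx zy].
by case: (@rainbow_triangle_through x y z xy); rewrite // eq_sym.
Qed.

Lemma rainbow_colouring_card_le4 : #|T| <= 4.
Proof.
have [v _] : exists v, v \in T by apply/card_gt0P; apply: leq_ltn_trans T_ge3.
have colour_inj : {in enum [set~ v] &, injective (c v)}.
  move=> x y; rewrite !mem_enum !inE => xv yv cxy; apply/eqP/negPn/negP => xy.
  rewrite eq_sym in xv; rewrite eq_sym in yv.
  by case: (rainbow_triangle_through xv yv xy); rewrite cxy eqxx.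
have : size [seq c v x | x <- enum [set~ v]] <= size (iota 0 3).
  apply: uniq_leq_size; first by rewrite map_inj_in_uniq ?enum_uniq.
  move=> i /mapP [x]; rewrite mem_iota mem_enum !inE eq_sym => vx ->.
  by case: (c_col.1 _ _ (rainbow_colouring_complete vx)).
by rewrite size_map -cardE cardsC1 size_iota; case: #|T|.
Qed.

End ThreeRainbowColouring.

(* The perfect matchings {01,23}, {02,13}, {03,12} of K_4 get colours
   0, 1, 2 respectively. *)
Definition K4_colour (i j : nat) : nat :=
  if i + j == 3 then 2 else if (i + j == 1) || (i + j == 5) then 0 else 1.

Lemma K4_colourC i j : K4_colour i j = K4_colour j i.
Proof. by rewrite /K4_colour addnC. Qed.

Lemma K4_colour_lt3 i j : K4_colour i j < 3.
Proof. by rewrite /K4_colour; case: ifP => //; case: ifP. Qed.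

Lemma K4_colour_triangle i j k : i < 4 -> j < 4 -> k < 4 ->
  i != j -> i != k -> j != k ->
  uniq [:: K4_colour i j; K4_colour j k; K4_colour k i].
Proof.
by case: i => [|[|[|[|i]]]] //; case: j => [|[|[|[|j]]]] //;
  case: k => [|[|[|[|k]]]].
Qed.

Lemma complete_rainbow_colouring (n : nat) (T : finType) (e : rel T)
    (g : T -> 'I_n) :
  n <= 4 -> injective g -> (forall x y, e x y = (x != y)) ->
  k_rainbow_cycle_colouring 3 e 3 (fun x y => K4_colour (g x) (g y)).
Proof.
move=> n4 g_inj eE; split=> [x y _|S cardS].
  by rewrite K4_colourC K4_colour_lt3.
move: (enum_uniq (mem S)) (mem_enum (mem S)); rewrite cardE in cardS.
case: (enum S) cardS => [|a [|b [|d [|? ?]]]] //= _ abd_uniq memS.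
have g_lt4 x : g x < 4 by apply: leq_trans (ltn_ord _) n4.
have g_neq x y : x != y -> nat_of_ord (g x) != g y.
  by rewrite (inj_eq val_inj) (inj_eq g_inj).
move: (abd_uniq); rewrite /= !inE !negb_or andbT => /andP [/andP [ab ad] bd].
exists [:: a; b; d]; split.
- by split=> //=; rewrite !eE ab bd eq_sym ad.
- by move=> x; rewrite memS.
- rewrite rainbow_triangleE //.
  exact: K4_colour_triangle (g_neq _ _ ab) (g_neq _ _ ad) (g_neq _ _ bd).
Qed.

Lemma complete_isomorphic_K (T : finType) (e : rel T) (n : nat) :
  #|T| = n -> (forall x y, e x y = (x != y)) -> isomorphic e (@K_graph n).
Proof.
move=> cardT eE; pose g x := cast_ord cardT (enum_rank x).
have g_inj : injective g by move=> x y /(congr1 val) /= /val_inj /enum_rank_inj.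
exists g; split; last by move=> x y; rewrite eE /K_graph (inj_eq g_inj).
exists (fun i => enum_val (cast_ord (esym cardT) i)) => [x|i].
  by rewrite /g cast_ordK enum_rankK.
by rewrite /g enum_valK; apply: val_inj.
Qed.

Lemma isomorphic_K_complete (T : finType) (e : rel T) (n : nat) :
  isomorphic e (@K_graph n) ->
  #|T| = n /\ exists g : T -> 'I_n, injective g /\ forall x y, e x y = (x != y).
Proof.
move=> [g [g_bij eE]]; split; first by rewrite (bij_eq_card g_bij) card_ord.
exists g; split; first exact: bij_inj.
by move=> x y; rewrite eE /K_graph (inj_eq (bij_inj g_bij)).
Qed.

Theorem theorem6 (T : finType) (e : rel T) :
  simple_graph e -> in_F 3 e ->
  (crx_eq 3 e 3 <-> isomorphic e (@K_graph 3) \/ isomorphic e (@K_graph 4)).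
Proof.
move=> [e_sym e_irr] _; split.
- move=> [[c c_col] c_min].
  have T_ge3 : 2 < #|T|.
    rewrite ltnNge; apply/negP => T_le2; apply: (c_min 1) => //.
    by exists (fun _ _ => 0); apply: small_rainbow_colouring.
  have eE x y : e x y = (x != y).
    case: eqVneq => [->|xy]; first exact: e_irr.
    by rewrite (rainbow_colouring_complete e_sym c_col T_ge3 xy).
  have card_le4 := rainbow_colouring_card_le4 e_sym c_col T_ge3.
  have [cardT|cardT] : #|T| = 3 \/ #|T| = 4.
    by case: #|T| T_ge3 card_le4 => [|[|[|[|[|]]]]] //; auto.
  + by left; apply: complete_isomorphic_K.
  + by right; apply: complete_isomorphic_K.
- move=> e_K.
  have [n [n_ge3 n_le4 [cardT [g [g_inj eE]]]]] : exists n,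
      [/\ 2 < n, n <= 4 & #|T| = n /\
       exists g : T -> 'I_n, injective g /\ forall x y, e x y = (x != y)].
    by case: e_K => /isomorphic_K_complete ?; [exists 3 | exists 4].
  split; first by eexists; apply: complete_rainbow_colouring n_le4 g_inj eE.
  move=> m m_lt3 [c c_col].
  have T_ge3 : 3 <= #|T| by rewrite cardT.
  by have := rainbow_colouring_ge3 T_ge3 c_col; rewrite leqNgt m_lt3.
Qed.
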